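(* If $H\in\mathcal{H}'$ and $H\notin\{K_4,W_5,M_7,J_7\}$, then $|V(H)|\ge 8$.
   Context: $M_7$ (Moser spindle): vertices $v_1,\dots,v_5,w_1,w_2$, with 5-cycle $v_1\cdots v_5$, $w_1$ adjacent to $v_1,v_2,v_3$ and $w_2$ adjacent to $v_1,v_4,v_5$. A near-bipartite coloring of a graph is a partition of its vertices into $I,F$ with $I$ independent and $G[F]$ a forest; a graph is nb-critical if it has none but every proper subgraph has one. Base graphs: $K_4$; the wheel $W_5$ (5-cycle plus a vertex adjacent to all its vertices); $J_7$, with vertices $w_1,\dots,w_4,v_1,v_2,v_3$ and edges $w_1v_1,w_1v_3,w_1w_4,w_2v_1,w_2v_2,w_2w_4,w_3v_2,w_3v_3,w_3w_4,v_1v_2,v_1v_3,v_2v_3$; and $J_{12}$, with vertices $a,b,p_1,\dots,p_4,q_1,\dots,q_6$ and edges $ab,p_1p_2,p_3p_4,ap_1,ap_2,bp_3,bp_4,q_1p_1,q_1p_2,q_2p_1,q_2p_2,q_3p_3,q_3p_4,q_4p_3,q_4p_4,q_5q_1,q_5q_3,q_6q_2,q_6q_4,q_5q_6$. The family $\mathcal{H}'$ is defined recursively: $s,t$ are specially-linked in $J$ if there exist $H\in\mathcal{H}'$ and $vw\in E(H)$ such that $J$ contains a subgraph isomorphic to $H-vw$ with $v\mapsto s,w\mapsto t$. $H\in\mathcal{H}'$ iff $H$ is a base graph, or $H$ is nb-critical with an induced cycle $C=x_1\cdots x_k$, $k\in\{3,5\}$, all $x_i$ of degree 3 in $H$, such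 that with $N(x_j)=\{x_{j-1},x_{j+1},z_j\}$ (indices mod $k$), whenever $z_j\ne z_{j+1}$ the vertices $z_j,z_{j+1}$ are specially-linked in $H-V(C)$. *)

(* Simple graphs are given by a vertex finType V and an
   adjacency relation e : rel V (symmetric and irreflexive). *)
From mathcomp Require Import all_boot.
Set Implicit Arguments.
Unset Strict Implicit.
Unset Printing Implicit Defensive.

Definition edges_rel (n : nat) (l : seq (nat * nat)) : rel 'I_n :=
  fun i j => ((val i, val j) \in l) || ((val j, val i) \in l).

Definition K4 : rel 'I_4 :=
  edges_rel [:: (0,1); (0,2); (0,3); (1,2); (1,3); (2,3)]%N.

(* W5: 5-cycle 0..4, hub 5 *)
Definition W5 : rel 'I_6 :=
  edges_rel [:: (0,1); (1,2); (2,3); (3,4); (4,0);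
                  (5,0); (5,1); (5,2); (5,3); (5,4)]%N.

(* Moser spindle: v1..v5 = 0..4, w1 = 5, w2 = 6 *)
Definition M7 : rel 'I_7 :=
  edges_rel [:: (0,1); (1,2); (2,3); (3,4); (4,0);
                  (5,0); (5,1); (5,2); (6,0); (6,3); (6,4)]%N.

(* J7: w1..w4 = 0..3, v1..v3 = 4..6 *)
Definition J7 : rel 'I_7 :=
  edges_rel [:: (0,4); (0,6); (0,3); (1,4); (1,5); (1,3);
                  (2,5); (2,6); (2,3); (4,5); (4,6); (5,6)]%N.

(* J12: a = 0, b = 1, p1..p4 = 2..5, q1..q6 = 6..11 *)
Definition J12 : rel 'I_12 :=
  edges_rel [:: (0,1); (2,3); (4,5); (0,2); (0,3); (1,4); (1,5);
                   (6,2); (6,3); (7,2); (7,3); (8,4); (8,5); (9,4); (9,5);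
                   (10,6); (10,8); (11,7); (11,9); (10,11)]%N.

Definition giso (V1 V2 : finType) (e1 : rel V1) (e2 : rel V2) : Prop :=
  exists f : V1 -> V2, bijective f /\ forall x y, e2 (f x) (f y) = e1 x y.

Definition is_base_graph (V : finType) (e : rel V) : Prop :=
  giso K4 e \/ giso W5 e \/ giso J7 e \/ giso J12 e.

Definition has_cycle_in (V : finType) (e : rel V) (F : {set V}) : Prop :=
  exists s : seq V, [/\ (3 <= size s)%N, uniq s, all (fun x => x \in F) s
                      & cycle e s].

(* near-bipartite coloring of the graph with vertex set U and edge relation e
   (e is assumed to only relate vertices of U) *)
Definition nb_colorable_on (V : finType) (U : {set V}) (e : rel V) : Prop :=
  exists I : {set V}, [/\ I \subset U,
                          (forall x y, x \in I -> y \in I -> ~~ e x y)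
                        & ~ has_cycle_in e (U :\: I)].

Definition nb_colorable (V : finType) (e : rel V) : Prop :=
  nb_colorable_on [set: V] e.

Definition proper_subgraph (V : finType) (e : rel V) (U : {set V}) (e' : rel V)
  : Prop :=
  [/\ symmetric e',
      (forall x y, e' x y -> [&& x \in U, y \in U & e x y])
    & (U != [set: V]) \/
      (exists x y, [&& x \in U, y \in U, e x y & ~~ e' x y])].

Definition nb_critical (V : finType) (e : rel V) : Prop :=
  ~ nb_colorable e /\
  forall (U : {set V}) (e' : rel V), proper_subgraph e U e' -> nb_colorable_on U e'.

(* The clause "z_j, z_{j+1} specially-linked in H - V(C)" is
   unfolded: there are W, eW in H', an edge v w of eW, and an injective map
   f from W into the vertices of H outside V(C) with f v = s, f w = t,
   mapping every edge of eW other than vw to an edge of H. *)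
Inductive Hprime : forall V : finType, rel V -> Prop :=
| Hprime_base (V : finType) (e : rel V) : is_base_graph e -> Hprime e
| Hprime_rec (V : finType) (e : rel V) :
    symmetric e -> irreflexive e -> nb_critical e ->
    (exists (k : nat) (x : nat -> V),
       [/\ k = 3 \/ k = 5,
           (forall i j, (i < k)%N -> (j < k)%N -> x i = x j -> i = j),
           (forall i j, (i < k)%N -> (j < k)%N ->
              e (x i) (x j) = (j == (i.+1 %% k)%N) || (i == (j.+1 %% k)%N)),
           (forall i, (i < k)%N -> #|[set y | e (x i) y]| = 3)
         &
           forall j zj zj1, (j < k)%N ->
             e (x j) zj -> (forall i, (i < k)%N -> zj != x i) ->
             e (x (j.+1 %% k)%N) zj1 -> (forall i, (i < k)%N -> zj1 != x i) ->
             zj != zj1 ->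
             exists (W : finType) (eW : rel W) (v w : W) (f : W -> V),
               [/\ Hprime eW, eW v w, injective f, f v = zj /\ f w = zj1
                 & (forall a i, (i < k)%N -> f a != x i) /\ forall a b, eW a b -> ~ ((a == v) && (b == w) || (a == w) && (b == v)) ->
                     e (f a) (f b)]]) ->
    Hprime e.

From mathcomp Require Import all_boot zify.
Set Implicit Arguments. Unset Strict Implicit. Unset Printing Implicit Defensive.

(* Every graph of H' has at least four vertices (its cycle vertices have degree
   3), and one with exactly four is K4: two non-adjacent vertices would be an
   independent set whose two-vertex complement is a forest.  Hence a special
   link between outer neighbours z_j, z_(j+1) of the reducible cycle C needs
   four vertices outside C.  On at most seven vertices this rules out every
   link when |C| = 5: all z_j coincide and the resulting wheel W5 spans the
   critical graph.  When |C| = 3 either all z_j coincide (K4), or the four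
   vertices outside C induce K4 minus the edge z_P z_Q; that edge is missing
   since a proper K4 is not nb-colourable, and the link z_Q z_R forces
   z_R in {z_P, z_Q}, which gives the Moser spindle.  Among the base graphs
   only J12 remains, and it has twelve vertices. *)

Section SeqCard.
Variables (V : finType) (s : seq V).

Lemma covering_card_le : (forall y, y \in s) -> #|V| <= size s.
Proof.
by move=> cover; apply: leq_trans (card_size s); apply/subset_leq_card/subsetP => y _.
Qed.

Lemma covering_uniq : (forall y, y \in s) -> size s <= #|V| -> uniq s.
Proof.
move=> cover le_s_V; apply/card_uniqP/eqP; rewrite eqn_leq card_size /=.
by apply: leq_trans le_s_V _; apply/subset_leq_card/subsetP => y _.
Qed.
End SeqCard.

Section Colorings.
Variables (V : finType) (e : rel V).

Definition induced (U : {set V}) : rel V := fun a b => [&& a \in U, b \in U & e a b].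

Lemma has_cycle_in_card (F : {set V}) : has_cycle_in e F -> 2 < #|F|.
Proof.
case=> s [s3 us /allP sF _]; apply: leq_trans s3 _.
by rewrite -(card_uniqP us); apply/subset_leq_card/subsetP.
Qed.

Lemma triangle_cycle (F : {set V}) p q r :
  irreflexive e -> p \in F -> q \in F -> r \in F ->
  e p q -> e q r -> e r p -> has_cycle_in e F.
Proof.
move=> irr pF qF rF pq qr rp.
have neq x y : e x y -> x != y by apply: contraTneq => ->; rewrite irr.
exists [:: p; q; r]; rewrite /= pF qF rF pq qr rp !inE negb_or.
by rewrite (neq _ _ pq) (neq _ _ qr) eq_sym (neq _ _ rp).
Qed.

Lemma clique_not_nb_colorable (U : {set V}) :
  irreflexive e -> 3 < #|U| -> {in U &, forall a b, a != b -> e a b} ->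
  ~ nb_colorable_on U e.
Proof.
move=> irr U4 clq [I [IU indI]]; apply.
have I1 : #|I| <= 1.
  rewrite leqNgt; apply/card_gt1P => -[a [b [aI bI ab]]].
  by move: (indI a b aI bI); rewrite clq ?(subsetP IU).
have : 2 < size (enum (U :\: I)) by rewrite -cardE cardsD (setIidPr IU); lia.
have := enum_uniq (U :\: I); have := mem_enum (U :\: I).
case: (enum _) => [|p [|q [|r s]]] // memUI u _.
have [pF qF rF] : [/\ p \in U :\: I, q \in U :\: I & r \in U :\: I].
  by split; rewrite -memUI !inE eqxx ?orbT.
have inU y : y \in U :\: I -> y \in U by case/setDP.
move: u; rewrite /= !inE !negb_or => /and3P[/and3P[pq pr _] /andP[qr _] _].
by apply: (triangle_cycle irr pF qF rF); rewrite clq ?inU // eq_sym.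
Qed.

Lemma wheel5_not_nb_colorable (U : {set V}) z a b c d f :
  symmetric e -> irreflexive e -> {subset [:: z; a; b; c; d; f] <= U} ->
  uniq [:: a; b; c; d; f] ->
  e z a -> e z b -> e z c -> e z d -> e z f ->
  e a b -> e b c -> e c d -> e d f -> e f a -> ~ nb_colorable_on U e.
Proof.
move=> sym irr sub urim za zb zc zd zf ab bc cd df fa [I [_ indI]]; apply.
have out y : y \in [:: z; a; b; c; d; f] -> y \notin I -> y \in U :\: I.
  by move=> /sub yU yI; rewrite inE yI yU.
have one_out y y' : e y y' -> (y \notin I) || (y' \notin I).
  by move=> yy'; rewrite -negb_and; apply/andP => -[/indI H /H]; rewrite yy'.
have hub_out y y' : z \notin I -> y \notin I -> y' \notin I ->
    y \in [:: a; b; c; d; f] -> y' \in [:: a; b; c; d; f] -> e z y -> e y y' ->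
    e y' z -> has_cycle_in e (U :\: I).
  move=> zI yI y'I ys y's; apply: triangle_cycle (out _ (mem_head _ _) zI) _ _ => //.
    by apply: out yI; rewrite in_cons ys orbT.
  by apply: out y'I; rewrite in_cons y's orbT.
case: (boolP (z \in I)) => zI.
  have rim_out y : e z y -> y \notin I by move/one_out; rewrite zI.
  exists [:: a; b; c; d; f]; split=> //; last by rewrite /= ab bc cd df fa.
  by rewrite /= !out ?rim_out ?inE ?eqxx ?orbT.
(* I meets the rim 5-cycle in at most two vertices, so some rim edge avoids I. *)
move: (one_out _ _ ab) (one_out _ _ bc) (one_out _ _ cd) (one_out _ _ df) (one_out _ _ fa).
case: (boolP (a \in I)) => aI; case: (boolP (b \in I)) => bI;
  case: (boolP (c \in I)) => cI; case: (boolP (d \in I)) => dI;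
  case: (boolP (f \in I)) => fI //= _ _ _ _ _;
  first [ by apply: (hub_out a b); rewrite ?inE ?eqxx ?orbT // sym
        | by apply: (hub_out b c); rewrite ?inE ?eqxx ?orbT // sym
        | by apply: (hub_out c d); rewrite ?inE ?eqxx ?orbT // sym
        | by apply: (hub_out d f); rewrite ?inE ?eqxx ?orbT // sym
        | by apply: (hub_out f a); rewrite ?inE ?eqxx ?orbT // sym ].
Qed.

Lemma nb_colorable_on_induced (U : {set V}) :
  nb_colorable_on U (induced U) -> nb_colorable_on U e.
Proof.
case=> I [IU indI noC]; exists I; split=> // [x y xI yI|[s [s3 us sUI es]]].
  by move: (indI x y xI yI); rewrite /induced !(subsetP IU).
apply: noC; exists s; split=> //; apply: (sub_in_cycle _ sUI es) => x y xUI yUI.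
by rewrite /induced; case/setDP: xUI => -> _; case/setDP: yUI => -> _.
Qed.

Lemma nb_critical_spanning (U : {set V}) :
  symmetric e -> nb_critical e -> ~ nb_colorable_on U e -> forall y, y \in U.
Proof.
move=> sym [_ crit] ncol y; apply/negPn/negP => yU; apply/ncol/nb_colorable_on_induced.
apply: crit; split.
- by move=> a b; rewrite /induced andbCA sym.
- by move=> a b /and3P[-> -> ->].
- by left; apply: contraNneq yU => ->; rewrite inE.
Qed.

Lemma nb_critical_clique_spanning (s : seq V) :
  symmetric e -> irreflexive e -> nb_critical e -> uniq s -> 3 < size s ->
  {in s &, forall a b, a != b -> e a b} -> forall y, y \in s.
Proof.
move=> sym irr crit us s4 clq y.
have := nb_critical_spanning sym crit (clique_not_nb_colorable (U := [set z in s]) irr _ _) y.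
rewrite inE; apply; first by rewrite cardsE (card_uniqP us).
by move=> a b; rewrite !inE; apply: clq.
Qed.

Lemma nb_critical_small_complete :
  symmetric e -> irreflexive e -> nb_critical e -> #|V| <= 4 ->
  forall a b, a != b -> e a b.
Proof.
move=> sym irr [ncol _] V4 a b ab; apply/negPn/negP => nab; apply: ncol.
exists [set a; b]; split; first exact: subsetT.
  by move=> p q; rewrite !inE => /orP[]/eqP-> /orP[]/eqP->; rewrite ?irr // sym.
move/has_cycle_in_card; rewrite cardsD setTI cardsT cards2 ab; lia.
Qed.
End Colorings.

Section Isomorphisms.
Variables (V : finType) (e : rel V).

Lemma giso_card n (E : rel 'I_n) : giso E e -> #|V| = n.
Proof. by case=> f [/bij_eq_card <- _]; rewrite card_ord. Qed.

Lemma giso_of_seq n (E : rel 'I_n) (s : seq V) d :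
  size s = n -> uniq s -> (forall y, y \in s) ->
  (forall i j : 'I_n, e (nth d s i) (nth d s j) = E i j) -> giso E e.
Proof.
move=> sz us cover edges; exists (fun i : 'I_n => nth d s i); split=> //.
apply: inj_card_bij; last by rewrite card_ord -sz covering_card_le.
by move=> i j /eqP; rewrite nth_uniq ?sz // => /eqP/val_inj.
Qed.

Lemma K4E (i j : 'I_4) : K4 i j = (i != j).
Proof. by case: i j => [[|[|[|[|i]]]] ?] [[|[|[|[|j]]]] ?]. Qed.

Lemma giso_K4_complete : giso K4 e -> forall a b, a != b -> e a b.
Proof.
case=> f [[g gK fK] fE] a b ab; rewrite -[a]fK -[b]fK fE K4E.
by apply: contra_neq ab => /(congr1 f); rewrite !fK.
Qed.

Lemma giso_K4_of_clique (s : seq V) :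
  irreflexive e -> size s = 4 -> uniq s -> (forall y, y \in s) ->
  {in s &, forall a b, a != b -> e a b} -> giso K4 e.
Proof.
move=> irr sz us cover clq; have d : V by case: s sz {us cover clq}.
apply: (giso_of_seq (d := d) sz us cover) => i j.
rewrite K4E; have [->|ij] := eqVneq i j; first by rewrite irr.
by rewrite clq ?mem_nth ?sz // (nth_uniq d) ?sz.
Qed.

Lemma giso_M7_of (C : {set V}) (s : seq V) d :
  symmetric e -> irreflexive e -> size s = 7 -> uniq s -> (forall y, y \in s) ->
  C =i [:: nth d s 1; nth d s 2; nth d s 5] ->
  (forall y, e (nth d s 1) y = [|| y == nth d s 2, y == nth d s 5 | y == nth d s 0]) ->
  (forall y, e (nth d s 2) y = [|| y == nth d s 5, y == nth d s 1 | y == nth d s 3]) ->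
  (forall y, e (nth d s 5) y = [|| y == nth d s 1, y == nth d s 2 | y == nth d s 0]) ->
  (forall a b, a \notin C -> b \notin C -> a != b ->
      [|| (a == nth d s 0) && (b == nth d s 3), (a == nth d s 3) && (b == nth d s 0)
       | e a b]) ->
  ~~ e (nth d s 0) (nth d s 3) -> giso M7 e.
Proof.
(* Positions 1, 2, 5 of [s] are the triangle v2 v3 w1 of the spindle, and
   positions 0, 3, 4, 6 induce K4 minus the edge v1 v4. *)
move=> sym irr sz us cover defC N1 N2 N5 outside n03.
have vE i j : i < 7 -> j < 7 -> (nth d s i == nth d s j) = (i == j).
  by rewrite -sz => ilt jlt; rewrite nth_uniq.
have outC i : i \in [:: 0; 3; 4; 6] -> nth d s i \notin C.
  by rewrite defC !inE => /or4P[]/eqP->; rewrite !vE.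
have O_edge i j : i \in [:: 0; 3; 4; 6] -> j \in [:: 0; 3; 4; 6] -> i != j ->
    (i, j) \notin [:: (0, 3); (3, 0)] -> e (nth d s i) (nth d s j).
  move=> iO jO ij; have := outside _ _ (outC i iO) (outC j jO).
  by move: iO jO ij; rewrite !inE => /or4P[]/eqP-> /or4P[]/eqP->; rewrite ?vE // => _ _ ->.
apply: (giso_of_seq (d := d) sz us cover).
case=> [[|[|[|[|[|[|[|i]]]]]]] ?] // [[|[|[|[|[|[|[|j]]]]]]] ?] //=;
  first [ by rewrite irr | by rewrite N1 !vE | by rewrite N2 !vE | by rewrite N5 !vE
        | by rewrite sym N1 !vE | by rewrite sym N2 !vE | by rewrite sym N5 !vE
        | by rewrite (negbTE n03) | by rewrite sym (negbTE n03) | by rewrite O_edge ].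
Qed.
End Isomorphisms.

Lemma deg3_outer_neighbor (V : finType) (e : rel V) (C : {set V}) u p q :
  #|[set y | e u y]| = 3 -> e u p -> e u q -> p != q ->
  {in C, forall c, e u c -> (c == p) || (c == q)} ->
  exists2 z, z \notin C & forall y, e u y = [|| y == p, y == q | y == z].
Proof.
move=> deg up uq pq inC; set N := [set y | e u y] in deg.
have pqN : [set p; q] \subset N.
  by apply/subsetP => y; rewrite !inE => /orP[]/eqP->.
have /cards1P[z defz] : #|N :\: [set p; q]| == 1.
  by rewrite cardsD (setIidPr pqN) cards2 pq deg.
have zN : z \in N :\: [set p; q] by rewrite defz set11.
have nbrE y : e u y = [|| y == p, y == q | y == z].
  have E : (y \in N) = (y \in [set p; q]) || (y \in N :\: [set p; q]).
    by rewrite in_setD; case: (boolP (y \in [set p; q])) => [/(subsetP pqN) ->|].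
  by move: E; rewrite defz !inE -orbA => ->.
exists z => //; apply/negP => /inC; rewrite nbrE eqxx !orbT => /(_ isT).
by move: zN; rewrite !inE negb_or => /andP[/andP[/negbTE-> /negbTE->]].
Qed.

Lemma deg3_card_gt3 (V : finType) (e : rel V) u :
  irreflexive e -> #|[set y | e u y]| = 3 -> 3 < #|V|.
Proof.
move=> irr deg; have := subset_leq_card (subsetT (u |: [set y | e u y])).
by rewrite cardsU1 inE irr deg cardsT.
Qed.

Lemma Hprime_card_gt3 (V : finType) (e : rel V) : Hprime e -> 3 < #|V|.
Proof.
case=> {}V {}e; first by case=> [|[|[|]]] /giso_card ->.
move=> _ irr _ [k [x [k35 _ _ deg _]]]; apply: (deg3_card_gt3 irr (deg 0 _)).
by case: k35 => ->.
Qed.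

Lemma Hprime_small_complete (V : finType) (e : rel V) :
  Hprime e -> #|V| <= 4 -> forall a b, a != b -> e a b.
Proof.
case=> {}V {}e; last by move=> sym irr crit _; apply: nb_critical_small_complete.
by case=> [|[|[|]]] iso; rewrite (giso_card iso) // => _; apply: giso_K4_complete.
Qed.

Definition specially_linked_outside (V : finType) (e : rel V) (C : {set V}) (s t : V) :=
  exists (W : finType) (eW : rel W) (v w : W) (f : W -> V),
    [/\ Hprime eW, eW v w, injective f, f v = s /\ f w = t
      & (forall a, f a \notin C) /\
        (forall a b, eW a b -> ~ ((a == v) && (b == w) || (a == w) && (b == v)) ->
           e (f a) (f b))].

Section SpeciallyLinked.
Variables (V : finType) (e : rel V) (C : {set V}) (s t : V).
Hypothesis link : specially_linked_outside e C s t.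

Lemma specially_linked_card : #|C| + 4 <= #|V|.
Proof.
case: link => W [eW [v [w [f [HW _ finj _ [fC _]]]]]].
have : #|f @: [set: W]| <= #|~: C|.
  by apply/subset_leq_card/subsetP => _ /imsetP[a _ ->]; rewrite inE fC.
by rewrite card_imset // cardsT; have := Hprime_card_gt3 HW; have := cardsC C; lia.
Qed.

Lemma specially_linked_tight : #|V| <= #|C| + 4 ->
  forall a b, a \notin C -> b \notin C -> a != b ->
  [|| (a == s) && (b == t), (a == t) && (b == s) | e a b].
Proof.
move=> small a b aC bC ab.
case: link => W [eW [v [w [f [HW _ finj [fv fw] [fC fE]]]]]].
have imC : f @: [set: W] \subset ~: C.
  by apply/subsetP => _ /imsetP[c _ ->]; rewrite inE fC.
have cardW : #|W| = #|~: C|.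
  have := subset_leq_card imC; rewrite card_imset // cardsT.
  by have := Hprime_card_gt3 HW; have := cardsC C; lia.
have onC : f @: [set: W] =i ~: C by apply/subset_cardP; rewrite ?card_imset ?cardsT.
have /imsetP[a' _ defa] : a \in f @: [set: W] by rewrite onC inE.
have /imsetP[b' _ defb] : b \in f @: [set: W] by rewrite onC inE.
subst a b.
have a'b' : a' != b' by apply: contra_neq ab => ->.
rewrite -fv -fw !(inj_eq finj) orbA; apply/orP.
case: (boolP (_ || _)) => [|not_vw]; [by left | right].
apply: fE; last exact/negP.
by apply: (Hprime_small_complete HW) a'b'; have := cardsC C; lia.
Qed.
End SpeciallyLinked.

Lemma giso_M7_of_triangle (V : finType) (e : rel V) (C : {set V}) P Q R zP zQ :
  symmetric e -> irreflexive e -> #|V| = 7 -> #|C| = 3 -> C =i [:: P; Q; R] ->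
  (forall y, e P y = [|| y == Q, y == R | y == zP]) ->
  (forall y, e Q y = [|| y == R, y == P | y == zQ]) ->
  (forall y, e R y = [|| y == P, y == Q | y == zP]) ->
  zP \notin C -> zQ \notin C -> zP != zQ -> ~~ e zP zQ ->
  (forall a b, a \notin C -> b \notin C -> a != b ->
     [|| (a == zP) && (b == zQ), (a == zQ) && (b == zP) | e a b]) ->
  giso M7 e.
Proof.
move=> sym irr V7 C3 defC NP NQ NR zPC zQC zPQ nPQ outside.
have : #|~: C :\: [set zP; zQ]| = 2.
  rewrite cardsD (setIidPr _); last by apply/subsetP => y; rewrite !inE => /orP[]/eqP->.
  by rewrite cards2 zPQ; have := cardsC C; lia.
have := mem_enum (~: C :\: [set zP; zQ]); rewrite cardE.
case: (enum _) => [|A [|B []]] // memAB _.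
have cover y : y \in [:: zP; P; Q; zQ; A; R; B].
  have [yC|yC] := boolP (y \in C).
    by move: yC; rewrite defC !inE => /or3P[]->; rewrite ?orbT.
  have [->|yzP] := eqVneq y zP; first exact: mem_head.
  have [->|yzQ] := eqVneq y zQ; first by rewrite !inE eqxx ?orbT.
  have : y \in [:: A; B] by rewrite memAB !inE yC negb_or yzP yzQ.
  by rewrite !inE => /orP[]->; rewrite ?orbT.
have us := covering_uniq cover (eq_leq (esym V7)).
exact: (giso_M7_of (d := zP) sym irr _ us cover defC NP NQ NR outside nPQ).
Qed.

Lemma giso_M7_of_distinct_outer (V : finType) (e : rel V) (C : {set V}) P Q R zP zQ zR :
  symmetric e -> irreflexive e -> nb_critical e -> #|V| <= 7 ->
  #|C| = 3 -> C =i [:: P; Q; R] ->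
  (forall y, e P y = [|| y == Q, y == R | y == zP]) ->
  (forall y, e Q y = [|| y == R, y == P | y == zQ]) ->
  (forall y, e R y = [|| y == P, y == Q | y == zR]) ->
  zP \notin C -> zQ \notin C -> zR \notin C -> zP != zQ ->
  specially_linked_outside e C zP zQ ->
  (zQ != zR -> specially_linked_outside e C zQ zR) -> giso M7 e.
Proof.
move=> sym irr crit V7 C3 defC NP NQ NR zPC zQC zRC zPQ link1 link2.
have V7' : #|V| = 7 by have := specially_linked_card link1; lia.
have small : #|V| <= #|C| + 4 by rewrite V7' C3.
have outside := specially_linked_tight link1 small.
have [ePQ|nPQ] := boolP (e zP zQ).
  have : P \in ~: C.
    apply: (nb_critical_spanning sym crit (clique_not_nb_colorable irr _ _)).
      by have := cardsC C; lia.
    move=> a b; rewrite !inE => aC bC ab.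
    by case/or3P: (outside a b aC bC ab) => // /andP[/eqP-> /eqP->]; rewrite // sym.
  by rewrite inE defC mem_head.
have [eRP|zRP] := eqVneq zR zP.
  by subst zR; apply: (giso_M7_of_triangle sym irr V7' C3 defC NP NQ NR zPC zQC zPQ nPQ outside).
have [eRQ|zRQ] := eqVneq zR zQ.
  (* the mirror image of the case zR = zP, exchanging P and Q *)
  subst zR; apply: (@giso_M7_of_triangle V e C Q P R zQ zP) => //.
  - by move=> y; rewrite defC !inE orbCA.
  - by move=> y; rewrite NQ orbCA.
  - by move=> y; rewrite NP orbCA.
  - by move=> y; rewrite NR orbCA.
  - by rewrite sym.
  - by move=> a b aC bC ab; rewrite orbCA outside.
(* Otherwise the link zQ zR makes zQ adjacent to zP, as zP differs from zR. *)
have zQR : zQ != zR by rewrite eq_sym.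
have := specially_linked_tight (link2 zQR) small zQC zPC; rewrite eq_sym => /(_ zPQ).
by rewrite eqxx [zP == zR]eq_sym (negbTE zRP) (negbTE zQR) sym (negbTE nPQ).
Qed.

Definition cycle_set (V : finType) (k : nat) (x : nat -> V) : {set V} :=
  [set y in map x (iota 0 k)].

Section ReducibleCycle.
Variables (V : finType) (e : rel V) (k : nat) (x : nat -> V).
Hypotheses (sym : symmetric e) (irr : irreflexive e) (k35 : k = 3 \/ k = 5).
Hypothesis x_inj : forall i j, i < k -> j < k -> x i = x j -> i = j.
Hypothesis x_ind : forall i j, i < k -> j < k ->
  e (x i) (x j) = (j == i.+1 %% k) || (i == j.+1 %% k).
Hypothesis x_deg : forall i, i < k -> #|[set y | e (x i) y]| = 3.
Hypothesis x_links : forall j zj zj1, j < k ->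
  e (x j) zj -> (forall i, i < k -> zj != x i) ->
  e (x (j.+1 %% k)) zj1 -> (forall i, i < k -> zj1 != x i) ->
  zj != zj1 ->
  exists (W : finType) (eW : rel W) (v w : W) (f : W -> V),
    [/\ Hprime eW, eW v w, injective f, f v = zj /\ f w = zj1
      & (forall a i, i < k -> f a != x i) /\
        forall a b, eW a b -> ~ ((a == v) && (b == w) || (a == w) && (b == v)) ->
          e (f a) (f b)].

Local Notation C := (cycle_set k x).

Lemma cycle_setP y : reflect (exists2 i, i < k & y = x i) (y \in C).
Proof.
rewrite inE; apply: (iffP mapP) => -[i]; rewrite ?mem_iota /= => ik ->; exists i => //.
by rewrite mem_iota.
Qed.

Lemma notin_cycle_set y : y \notin C -> forall i, i < k -> y != x i.
Proof. by move=> yC i ik; apply: contraNneq yC => ->; apply/cycle_setP; exists i. Qed.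

Lemma uniq_cycle : uniq (map x (iota 0 k)).
Proof.
by rewrite map_inj_in_uniq ?iota_uniq // => i j; rewrite !mem_iota; apply: x_inj.
Qed.

Lemma card_cycle_set : #|C| = k.
Proof. by rewrite cardsE (card_uniqP uniq_cycle) size_map size_iota. Qed.

Lemma cycle_links j s t : j < k -> e (x j) s -> s \notin C ->
  e (x (j.+1 %% k)) t -> t \notin C -> s != t -> specially_linked_outside e C s t.
Proof.
move=> jk js sC jt tC st.
have [W [eW [v [w [f [HW vw finj fvw [fC fE]]]]]]] :=
  x_links jk js (notin_cycle_set sC) jt (notin_cycle_set tC) st.
exists W, eW, v, w, f; split=> //; split=> // a.
by apply/cycle_setP => -[i ik]; apply/eqP/fC.
Qed.

Lemma outer_neighbor j : j < k -> exists2 z, z \notin C &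
  forall y, e (x j) y = [|| y == x (j.+1 %% k), y == x ((j + k.-1) %% k) | y == z].
Proof.
move=> jk.
have succ_lt : j.+1 %% k < k by case: (k35) => ->; lia.
have pred_lt : (j + k.-1) %% k < k by case: (k35) => ->; lia.
apply: deg3_outer_neighbor (x_deg jk) _ _ _ _.
- by rewrite x_ind // eqxx.
- by rewrite x_ind // [j == _](_ : _ = true) ?orbT //; apply/eqP; case: (k35) jk => ->; lia.
- by apply/eqP => /x_inj; case: (k35) succ_lt pred_lt => ->; lia.
- move=> _ /cycle_setP[i ik ->]; rewrite x_ind // => /orP[]/eqP eqi.
    by rewrite eqi eqxx.
  by rewrite [i](_ : _ = (j + k.-1) %% k) ?eqxx ?orbT //; case: (k35) jk ik eqi => ->; lia.
Qed.

Lemma outer_neighbors_coincide j s t : #|V| < k + 4 -> j < k ->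
  e (x j) s -> s \notin C -> e (x (j.+1 %% k)) t -> t \notin C -> s = t.
Proof.
move=> small jk js sC jt tC; apply/eqP; apply: contraTT small => st.
have := specially_linked_card (cycle_links jk js sC jt tC st).
by rewrite card_cycle_set -leqNgt.
Qed.

Lemma common_outer_neighbor : #|V| < k + 4 ->
  exists2 z, z \notin C & forall i, i < k -> e (x i) z.
Proof.
move=> small; have k0 : 0 < k by case: k35 => ->.
have [z zC /(_ z)] := outer_neighbor k0; rewrite eqxx !orbT => ez.
exists z => //; elim=> // i IH ik.
have [z' z'C /(_ z')] := outer_neighbor ik; rewrite eqxx !orbT => ez'.
have := outer_neighbors_coincide small (ltnW ik) (IH (ltnW ik)) zC.
by rewrite modn_small // => /(_ z' ez' z'C) ->.
Qed.

Lemma small_triangle_K4_or_M7 : k = 3 -> nb_critical e -> #|V| <= 7 -> giso K4 e \/ giso M7 e.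
Proof.
move=> k3 crit V7; move: outer_neighbor cycle_links card_cycle_set uniq_cycle.
subst k => outer links C3 ux.
have defC : cycle_set 3 x =i [:: x 0; x 1; x 2] by move=> y; rewrite inE.
have [z0 z0C N0] : exists2 z, z \notin cycle_set 3 x &
  forall y, e (x 0) y = [|| y == x 1, y == x 2 | y == z] := outer 0 isT.
have [z1 z1C N1] : exists2 z, z \notin cycle_set 3 x &
  forall y, e (x 1) y = [|| y == x 2, y == x 0 | y == z] := outer 1 isT.
have [z2 z2C N2] : exists2 z, z \notin cycle_set 3 x &
  forall y, e (x 2) y = [|| y == x 0, y == x 1 | y == z] := outer 2 isT.
have e0 : e (x 0) z0 by rewrite N0 eqxx !orbT.
have e1 : e (x 1) z1 by rewrite N1 eqxx !orbT.
have e2 : e (x 2) z2 by rewrite N2 eqxx !orbT.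
have [e01|z01] := eqVneq z0 z1; last first.
  right; apply: (giso_M7_of_distinct_outer sym irr crit V7 C3 defC N0 N1 N2) => //.
    exact: (links 0).
  by move=> z12; apply: (links 1).
subst z1; have [e02|z02] := eqVneq z0 z2; last first.
  right; apply: (giso_M7_of_distinct_outer sym irr crit V7 C3 _ N1 N2 N0) => //.
  - by move=> y; rewrite defC !inE orbC orbA.
  - exact: (links 1).
  - by move=> z20; apply: (links 2).
subst z2; left; have clq : {in [:: x 0; x 1; x 2; z0] &, forall a b, a != b -> e a b}.
  move=> a b; rewrite !inE => /or4P[]/eqP-> /or4P[]/eqP->; rewrite ?eqxx // => _;
  by rewrite ?N0 ?N1 ?N2 ?eqxx ?orbT // sym ?N0 ?N1 ?N2 ?eqxx ?orbT.
have us : uniq (rcons (map x (iota 0 3)) z0) by rewrite rcons_uniq ux andbT -defC.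
have cover := nb_critical_clique_spanning sym irr crit us isT clq.
exact: giso_K4_of_clique irr _ us cover clq.
Qed.

Lemma small_pentagon_W5 : k = 5 -> nb_critical e -> #|V| <= 7 -> giso W5 e.
Proof.
move=> k5 crit V7; have [|z zC hub] := common_outer_neighbor; first by rewrite k5; lia.
move: uniq_cycle zC hub; subst k => ux zC hub.
have rim i j : i < 5 -> j < 5 -> j = i.+1 %% 5 -> e (x i) (x j).
  by move=> ik jk ji; rewrite x_ind // ji eqxx.
have cover y : y \in [:: z; x 0; x 1; x 2; x 3; x 4].
  suff : y \in [set y in [:: z; x 0; x 1; x 2; x 3; x 4]] by rewrite inE.
  apply: (nb_critical_spanning sym crit).
  by apply: (wheel5_not_nb_colorable (z := z) sym irr) ux _ _ _ _ _ (rim 0 1 _ _ _)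
    (rim 1 2 _ _ _) (rim 2 3 _ _ _) (rim 3 4 _ _ _) (rim 4 0 _ _ _) => // [w|||||];
    rewrite ?inE // sym hub.
have us : uniq (rcons (map x (iota 0 5)) z).
  by rewrite rcons_uniq ux andbT; rewrite inE in zC.
apply: (giso_of_seq (d := z) _ us) => [//|y|]; first by rewrite mem_rcons; apply: cover.
case=> [[|[|[|[|[|[|i]]]]]] ?] [[|[|[|[|[|[|j]]]]]] ?] //=;
  by rewrite ?irr ?x_ind ?hub // sym hub.
Qed.
End ReducibleCycle.

Theorem lemma3p7 (V : finType) (e : rel V) :
  symmetric e -> irreflexive e -> Hprime e ->
  ~ giso K4 e -> ~ giso W5 e -> ~ giso M7 e -> ~ giso J7 e ->
  (8 <= #|V|)%N.
Proof.
move=> sym0 irr0 HP nK4 nW5 nM7 nJ7; rewrite leqNgt; apply/negP => V7.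
case: V e / HP sym0 irr0 nK4 nW5 nM7 nJ7 V7 => V e.
  by move=> base _ _ nK4 nW5 _ nJ7; case: base => [/nK4|[/nW5|[/nJ7|/giso_card ->]]].
move=> sym irr crit [k [x [k35 x_inj x_ind x_deg x_links]]] _ _ nK4 nW5 nM7 _ V7.
have [k3|k5] := k35.
  by case: (small_triangle_K4_or_M7 sym irr k35 x_inj x_ind x_deg x_links k3 crit V7).
exact/nW5/(small_pentagon_W5 sym irr k35 x_inj x_ind x_deg x_links k5 crit V7).
Qed.
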